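(* Let $\varepsilon\ge0$, $\mathcal L'\subseteq\mathcal L$, $\mathcal J'\subseteq\mathcal J$. If $B=\mathcal L'\cup\mathcal J'$ is a basis of $\mathrm{LP}(\theta,\varepsilon)$, then its basic solution $x\in\mathbb R^L$ satisfies, for $(ij)\in\mathcal L$, $$x_{ij}=\begin{cases}\sum_{k\in\mathsf C(\mathcal T(i))}\lambda_k-\sum_{\ell\in\mathsf S(\mathcal T(i))}(\mu_\ell-\varepsilon)&\text{if } i\text{ is a child of } j\text{ in }\mathcal G(\mathcal L',\mathcal J'),\\ \sum_{\ell\in\mathsf S(\mathcal T(j))}(\mu_\ell-\varepsilon)-\sum_{k\in\mathsf C(\mathcal T(j))}\lambda_k&\text{if } i\text{ is the parent of } j\text{ in }\mathcal G(\mathcal L',\mathcal J'),\\ 0&\text{if }(ij)\in\mathcal L\setminus\mathcal L'.\end{cases}$$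
   Context: $\mathcal I=\{1,\dots,I\}$ and $\mathcal J=\{1,\dots,J\}$ are disjoint node sets, $\mathcal L\subseteq\mathcal I\times\mathcal J$, $L=|\mathcal L|$, $\mathcal S_i=\{j:(ij)\in\mathcal L\}$, $\mathcal C_j=\{i:(ij)\in\mathcal L\}$. For $\lambda\in\mathbb R^I_{>0}$, $\mu\in\mathbb R^J_{>0}$, $\theta\in\mathbb R^L_{\ge0}$, $\mathrm{LP}(\theta,\varepsilon)$ in standard form is: maximize $\sum\theta_{ij}x_{ij}$ s.t. $\sum_{j\in\mathcal S_i}x_{ij}=\lambda_i$ ($i\in\mathcal I$), $\sum_{i\in\mathcal C_j}x_{ij}+\sigma_j=\mu_j-\varepsilon$ ($j\in\mathcal J$), $x,\sigma\ge0$, with variables indexed by $\mathcal L\cup\mathcal J$. A basis is $B\subseteq\mathcal L\cup\mathcal J$ with $|B|=I+J$ and invertible corresponding column submatrix; the basic solution is the unique solution of the equality constraints with all variables outside $B$ equal to $0$. $\mathcal G(\mathcal L',\mathcal J')$ is the subgraph of the bipartite graph $(\mathcal I\cup\mathcal J,\mathcal L)$ with edge set $\mathcal L'$; when $B$ is a basis it is a spanning forest (acyclic, containing all nodes, each tree containing exactly one node of $\mathcal J'$), and each tree is rooted at its node in $\mathcal J'$, which defines parent/child relations. $\mathcal T(v)$ is the subtree rooted at node $v$ including $v$, $\mathsf C(\mathcal T(v))=\mathcal T(v)\cap\mathcal I$, $\mathsf S(\mathcal T(v))=\mathcal T(v)\cap\mathcal J$. *)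

From HB Require Import structures.
From mathcomp Require Import all_boot all_order all_algebra.
Set Implicit Arguments. Unset Strict Implicit. Unset Printing Implicit Defensive.
Import Order.TTheory GRing.Theory Num.Theory.
Local Open Scope ring_scope.

(* Nodes of the bipartite graph: inl i (i in I = 'I_nI), inr j (j in J = 'I_nJ).
   Edges: pairs (i, j).  LP variables: inl (i,j) for edges, inr j for slacks. *)

(* Column of the constraint matrix of LP(theta, eps) for variable v,
   evaluated at constraint row r (row inl i: supply constraint of i,
   row inr j: capacity constraint of j). *)
Definition colA (R : nzRingType) (nI nJ : nat)
  (v : ('I_nI * 'I_nJ) + 'I_nJ) (r : 'I_nI + 'I_nJ) : R :=
  match v, r with
  | inl (i, j), inl i' => (i' == i)%:R
  | inl (i, j), inr j' => (j' == j)%:R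
  | inr j, inl _ => 0
  | inr j, inr j' => (j' == j)%:R
  end.

Definition basis_set (nI nJ : nat) (L' : {set 'I_nI * 'I_nJ}) (J' : {set 'I_nJ})
  : {set ('I_nI * 'I_nJ) + 'I_nJ} :=
  [set inl e | e in L'] :|: [set inr j | j in J'].

Definition basis_mx (R : nzRingType) (nI nJ : nat) (B : {set ('I_nI * 'I_nJ) + 'I_nJ})
  : 'M[R]_(nI + nJ, #|B|) :=
  \matrix_(r < nI + nJ, b < #|B|) colA R (enum_val b) (split r).

Definition is_basis (R : fieldType) (nI nJ : nat) (L L' : {set 'I_nI * 'I_nJ})
  (J' : {set 'I_nJ}) : Prop :=
  [/\ L' \subset L,
      #|basis_set L' J'| = (nI + nJ)%N &
      \rank (basis_mx R (basis_set L' J')) = (nI + nJ)%N].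

Definition basic_solution (R : nzRingType) (nI nJ : nat) (L L' : {set 'I_nI * 'I_nJ})
  (J' : {set 'I_nJ}) (lam : 'I_nI -> R) (mu : 'I_nJ -> R) (eps : R)
  (x : 'I_nI * 'I_nJ -> R) (sigma : 'I_nJ -> R) : Prop :=
  [/\ (forall i, \sum_(j | (i, j) \in L) x (i, j) = lam i),
      (forall j, \sum_(i | (i, j) \in L) x (i, j) + sigma j = mu j - eps),
      (forall e, e \in L -> e \notin L' -> x e = 0) &
      (forall j, j \notin J' -> sigma j = 0)].

Definition gadj (nI nJ : nat) (L' : {set 'I_nI * 'I_nJ}) : rel ('I_nI + 'I_nJ) :=
  fun u w =>
  match u, w with
  | inl i, inr j => (i, j) \in L'
  | inr j, inl i => (i, j) \in L'
  | _, _ => false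
  end.

Definition gadj_wo (nI nJ : nat) (L' : {set 'I_nI * 'I_nJ}) (v : 'I_nI + 'I_nJ)
  : rel ('I_nI + 'I_nJ) :=
  fun u w => [&& gadj L' u w, u != v & w != v].

(* T(v): the subtree rooted at v (trees rooted at their node in J'):
   the nodes w of the tree of v such that every path from w to a root
   (node of J') passes through v, together with v itself. *)
Definition subtree (nI nJ : nat) (L' : {set 'I_nI * 'I_nJ}) (J' : {set 'I_nJ})
  (v : 'I_nI + 'I_nJ) : {set 'I_nI + 'I_nJ} :=
  [set w | connect (gadj L') v w &&
           ((w == v) || ~~ [exists r in J', connect (gadj_wo L' v) w (inr r)])].

Definition is_child (nI nJ : nat) (L' : {set 'I_nI * 'I_nJ}) (J' : {set 'I_nJ})
  (c p : 'I_nI + 'I_nJ) : bool :=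
  gadj L' c p && (c \in subtree L' J' p).

Definition sumC (R : nzRingType) (nI nJ : nat) (L' : {set 'I_nI * 'I_nJ})
  (J' : {set 'I_nJ}) (lam : 'I_nI -> R) (v : 'I_nI + 'I_nJ) : R :=
  \sum_(k | inl k \in subtree L' J' v) lam k.

Definition sumS (R : nzRingType) (nI nJ : nat) (L' : {set 'I_nI * 'I_nJ})
  (J' : {set 'I_nJ}) (mu : 'I_nJ -> R) (eps : R) (v : 'I_nI + 'I_nJ) : R :=
  \sum_(l | inr l \in subtree L' J' v) (mu l - eps).

From HB Require Import structures.
From mathcomp Require Import all_boot all_order all_algebra.
From mathcomp Require Import ring.
Import Order.TTheory GRing.Theory Num.Theory.
Local Open Scope ring_scope.
Set Implicit Arguments. Unset Strict Implicit. Unset Printing Implicit Defensive.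

(* The basic solution obeys flow conservation: for a set S of nodes containing
   no root, the net supply of S (the sum of lam over C(S) minus the sum of
   mu - eps over S(S)) equals the net flow x leaving S along edges of L'.
   Invertibility of the basis matrix makes G(L', J') a forest in which every
   node is connected to a root: a cycle would give a vanishing combination of
   basic columns, a rootless component a vanishing combination of rows.  Hence
   for a child c of p the edge (c p) is the only edge of L' leaving the subtree
   T(c), and applying conservation to S = T(c) yields x on that edge, with the
   sign given by the side of c. *)

Section Avoiding.

Variables (T : finType) (e : rel T) (D : pred T).

Definition avoiding : rel T := fun u w => [&& e u w, u \notin D & w \notin D].

Lemma avoiding_sym : symmetric e -> symmetric avoiding.
Proof. by move=> sym_e u w; rewrite /avoiding sym_e [(u \notin D) && _]andbC. Qed.

Lemma connect_avoiding_sub : subrel (connect avoiding) (connect e).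
Proof. by apply: connect_sub => u w /andP[euw _]; apply: connect1. Qed.

Lemma connect_avoid_or_hit x y : connect e x y -> x \notin D ->
  (y \notin D /\ connect avoiding x y) \/
  exists z d, [/\ z \notin D, d \in D, connect avoiding x z & e z d].
Proof.
case/connectP=> p + ->{y}; elim: p x => [|z p IHp] x /=; first by move=> _ xD; left.
case/andP=> exz zp xD; have [zD|zD] := boolP (z \in D).
  by right; exists x, z.
have axz : avoiding x z by rewrite /avoiding exz xD zD.
case: (IHp z zp zD) => [[yD zy] | [w [d [wD dD zw wd]]]].
  by left; split => //; apply: connect_trans (connect1 axz) zy.
by right; exists w, d; split => //; apply: connect_trans (connect1 axz) zw.
Qed.

End Avoiding.

Lemma sum_mul_delta (R : nzRingType) (I : finType) (w : I -> R) a :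
  \sum_r w r * (r == a)%:R = w a.
Proof.
rewrite (bigD1 a) //= eqxx mulr1 big1 ?addr0 // => r /negbTE->.
by rewrite mulr0.
Qed.

Section Forest.

Variables (nI nJ : nat) (L' : {set 'I_nI * 'I_nJ}) (J' : {set 'I_nJ}).

Local Notation node := ('I_nI + 'I_nJ)%type.
Local Notation adj := (gadj L').
Local Notation adj_wo := (gadj_wo L').
Local Notation T := (subtree L' J').

Definition ends (e : 'I_nI * 'I_nJ) : {set node} := [set inl e.1; inr e.2].

Lemma ends_inj : injective ends.
Proof.
move=> [i j] [i' j'] /setP E.
move: (E (inl i)) (E (inr j)); rewrite !inE !eqxx /=.
by move=> /esym/orP[/eqP[->]|//] /esym/eqP[->].
Qed.

Lemma gadj_sym : symmetric adj.
Proof. by move=> [a|a] [b|b]. Qed.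

Lemma gadj_neq u w : adj u w -> u != w.
Proof. by case: u w => [a|a] [b|b]. Qed.

Lemma gadj_ends u w : adj u w -> exists2 e, e \in L' & ends e = [set u; w].
Proof.
case: u w => [i|j] [i'|j'] //= H; first by exists (i, j').
by exists (i', j); rewrite // /ends setUC.
Qed.

Lemma gadj_wo_sub v : subrel (adj_wo v) adj.
Proof. by move=> u w /andP[]. Qed.

Lemma connect_avoiding_wo (e : rel node) D v :
  subrel e adj -> v \in D -> subrel (connect (avoiding e D)) (connect (adj_wo v)).
Proof.
move=> sub_e vD; apply: connect_sub => u w /and3P[euw uD wD]; apply: connect1.
rewrite /gadj_wo sub_e //=.
by apply/andP; split; [apply: contraNneq uD | apply: contraNneq wD] => ->.
Qed.

Definition rooted_wo (v w : node) : bool :=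
  [exists r in J', connect (adj_wo v) w (inr r)].

Lemma rooted_wo_root v l : l \in J' -> rooted_wo v (inr l).
Proof. by move=> lJ'; apply/exists_inP; exists l. Qed.

Lemma in_subtree v w :
  (w \in T v) = connect adj v w && ((w == v) || ~~ rooted_wo v w).
Proof. by rewrite inE. Qed.

Lemma subtree_self v : v \in T v.
Proof. by rewrite in_subtree connect0 eqxx. Qed.

Lemma subtree_adj v a b : adj a b -> a \in T v -> a != v -> b \in T v.
Proof.
move=> ab; rewrite !in_subtree => /andP[va] /[swap] av; rewrite (negbTE av) /=.
rewrite (connect_trans va (connect1 ab)) /=; have [//|bv] := eqVneq b v.
apply: contra => /exists_inP[r rJ' br]; apply/exists_inP; exists r => //.
by apply: connect_trans br; apply: connect1; rewrite /gadj_wo ab av bv.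
Qed.

Lemma subtree_exit v a b : adj a b -> a \in T v -> b \notin T v -> rooted_wo v b.
Proof.
move=> ab; rewrite !in_subtree => /andP[va _].
by rewrite (connect_trans va (connect1 ab)) /= negb_or negbK => /andP[].
Qed.

Lemma subtree_no_root v l : inr l \in T v -> inr l != v -> l \notin J'.
Proof.
rewrite in_subtree => /andP[_] /[swap] /negbTE->.
by apply: contra => /(rooted_wo_root v).
Qed.

Lemma child_subtree_no_root c p :
  is_child L' J' c p -> forall l, inr l \in T c -> l \notin J'.
Proof.
case/andP=> cp cTp l lT; have [lc|] := eqVneq (inr l) c; last exact: subtree_no_root lT.
subst c; move: cTp; rewrite in_subtree (negbTE (gadj_neq cp)) /= => /andP[_].
by apply: contra => /(rooted_wo_root p).
Qed.

Lemma flow_balance (R : nzRingType) (L : {set 'I_nI * 'I_nJ}) lam mu (eps : R)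
    x sigma (S : {set node}) :
  basic_solution L L' J' lam mu eps x sigma ->
  (forall l, inr l \in S -> l \notin J') ->
  \sum_(k | inl k \in S) lam k - \sum_(l | inr l \in S) (mu l - eps) =
  \sum_(e in L) x e * ((inl e.1 \in S)%:R - (inr e.2 \in S)%:R).
Proof.
case=> supply demand _ slack0 S_free.
have -> : \sum_(k | inl k \in S) lam k = \sum_(e in L) x e * (inl e.1 \in S)%:R.
  transitivity (\sum_k \sum_(m | (k, m) \in L) x (k, m) * (inl k \in S)%:R).
    rewrite big_mkcond; apply: eq_bigr => k _; rewrite -big_distrl /= supply.
    by case: (inl k \in S); rewrite ?mulr1 ?mulr0.
  by rewrite pair_big_dep; apply: eq_big => -[].
have -> : \sum_(l | inr l \in S) (mu l - eps) = \sum_(e in L) x e * (inr e.2 \in S)%:R.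
  transitivity (\sum_l \sum_(k | (k, l) \in L) x (k, l) * (inr l \in S)%:R).
    rewrite big_mkcond; apply: eq_bigr => l _; rewrite -big_distrl /=.
    have [lS|_] := boolP (inr l \in S); last by rewrite mulr0.
    by rewrite -demand slack0 ?addr0 ?mulr1 ?S_free.
  by rewrite (exchange_big_dep xpredT) // pair_big_dep; apply: eq_big => -[].
by rewrite -sumrB; apply: eq_bigr => e _; rewrite mulrBr.
Qed.

Section Basis.

Variables (R : fieldType) (L : {set 'I_nI * 'I_nJ}).
Hypothesis basis : is_basis R L L' J'.

Local Notation var := (('I_nI * 'I_nJ) + 'I_nJ)%type.

Definition colcomb (c : var -> R) (r : node) : R := \sum_v c v * colA R v r.

Lemma colcomb_add c a v0 r :
  colcomb (fun v => c v + a * (v == v0)%:R) r = colcomb c r + a * colA R v0 r.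
Proof.
rewrite /colcomb; under eq_bigr do rewrite mulrDl; rewrite big_split /=.
congr (_ + _); rewrite (bigD1 v0) //= eqxx mulr1 big1 ?addr0 // => v /negbTE->.
by rewrite mulr0 mul0r.
Qed.

Lemma colA_slack (j : 'I_nJ) (r : node) : colA R (inr j) r = (r == inr j)%:R.
Proof. by case: r. Qed.

Lemma colA_edge e (r : node) : colA R (inl e) r = (r \in ends e)%:R.
Proof. by case: e r => i j [a|a]; rewrite !inE /= ?orbF. Qed.

Lemma colA_ends e u w r :
  ends e = [set u; w] -> u != w -> colA R (inl e) r = (r == u)%:R + (r == w)%:R.
Proof.
move=> eE uw; rewrite colA_edge eE !inE.
by case: eqVneq => [->|_]; rewrite ?(negbTE uw) ?addr0 ?add0r.
Qed.

Lemma edge_in_basis e : e \in L' -> inl e \in basis_set L' J'.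
Proof. by move=> eL'; rewrite inE; apply/orP; left; apply: imset_f. Qed.

Lemma basis_col_free c :
  (forall v, c v != 0 -> v \in basis_set L' J') ->
  (forall r, colcomb c r = 0) -> forall v, c v = 0.
Proof.
case: basis => _ cardB rankB suppc Ac v.
set B := basis_set L' J' in suppc cardB rankB *.
pose z := \row_(b < #|B|) c (enum_val b).
have freeAT : row_free (basis_mx R B)^T by rewrite /row_free mxrank_tr rankB cardB.
have /eqP : z *m (basis_mx R B)^T = 0.
  apply/rowP => r; rewrite !mxE; transitivity (colcomb c (split r)); last exact: Ac.
  transitivity (\sum_(v in B) c v * colA R v (split r)).
    rewrite (big_enum_val (fun v => c v * colA R v (split r))).
    by apply: eq_bigr => b _; rewrite !mxE.
  rewrite /colcomb [RHS](bigID (mem B)) /= [X in _ = _ + X]big1 ?addr0 // => u uB.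
  by apply/eqP; rewrite mulf_eq0; apply/orP; left; apply: contraNT uB => /suppc.
rewrite mulmx_free_eq0 // => /eqP/rowP z0.
have [vB|vB] := boolP (v \in B); last by apply/eqP; apply: contraNT vB => /suppc.
by move: (z0 (enum_rank_in vB v)); rewrite !mxE enum_rankK_in.
Qed.

Lemma basis_row_free (w : node -> R) :
  (forall v, v \in basis_set L' J' -> \sum_r w r * colA R v r = 0) ->
  forall r, w r = 0.
Proof.
case: basis => _ cardB rankB wA r.
set B := basis_set L' J' in wA cardB rankB *.
pose y := \row_(s < nI + nJ) w (split s).
have freeA : row_free (basis_mx R B) by rewrite /row_free rankB.
have /eqP : y *m basis_mx R B = 0.
  apply/rowP => b; rewrite !mxE -[RHS](wA _ (enum_valP b)).
  rewrite (reindex (@split nI nJ)) /=; last first.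
    by exists unsplit => s _; rewrite ?splitK ?unsplitK.
  by apply: eq_bigr => s _; rewrite !mxE.
rewrite mulmx_free_eq0 // => /eqP/rowP/(_ (unsplit r)).
by rewrite !mxE unsplitK.
Qed.

Definition sgn (n : node) : R := if n is inl _ then 1 else -1.

Lemma sgn_neq0 n : sgn n != 0.
Proof. by case: n => ?; rewrite ?oppr_eq0 oner_eq0. Qed.

Lemma sgn_adj u w : adj u w -> sgn w = - sgn u.
Proof. by case: u w => [a|a] [b|b]; rewrite //= opprK. Qed.

Lemma path_comb u x y : connect (adj_wo u) x y ->
  exists c : var -> R,
    (forall v, c v != 0 -> v \in [set inl e | e in L' & u \notin ends e]) /\
    (forall r, colcomb c r = sgn x * (r == x)%:R - sgn y * (r == y)%:R).
Proof.
case/connectP=> p + ->{y}; elim: p x => [|z p IHp] x /=.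
  move=> _; exists (fun=> 0); split => [v|r]; first by rewrite eqxx.
  by rewrite subrr /colcomb big1 // => v _; rewrite mul0r.
case/andP=> /and3P[xz xu zu] /IHp[c [suppc Ac]].
have [e eL' eE] := gadj_ends xz.
(* Since sgn z = - sgn x, the edge x-z contributes sgn x e_x - sgn z e_z. *)
exists (fun v => c v + sgn x * (v == inl e)%:R); split => [v /=|r].
  have [-> _|_] := eqVneq v (inl e); last by rewrite mulr0 addr0; apply: suppc.
  by apply: imset_f; rewrite inE eL' eE !inE negb_or ![u == _]eq_sym xu zu.
rewrite colcomb_add Ac (colA_ends r eE (gadj_neq xz)) (sgn_adj xz).
ring.
Qed.

Lemma no_cycle u a b : adj u a -> adj u b -> a != b -> ~~ connect (adj_wo u) a b.
Proof.
move=> ua ub ab; apply/negP => /path_comb[c [suppc Ac]].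
have [e1 e1L' e1E] := gadj_ends ua; have [e2 e2L' e2E] := gadj_ends ub.
have e21 : inl e2 != inl e1 :> var.
  apply: contraNneq ab => -[e2e1].
  have : a \in ends e2 by rewrite e2e1 e1E !inE eqxx orbT.
  by rewrite e2E !inE eq_sym (negbTE (gadj_neq ua)).
have ce2 : c (inl e2) = 0.
  apply/eqP; apply: contraT => /suppc/imsetP[e]; rewrite inE => /andP[_] /[swap] -[<-].
  by rewrite e2E !inE eqxx.
(* Columns around the cycle u -> a ~> b -> u: they cancel, but the weight on u-b is sgn a. *)
pose c' v := c v + sgn a * (v == inl e2)%:R + - sgn a * (v == inl e1)%:R.
have suppc' v : c' v != 0 -> v \in basis_set L' J'.
  have [->|ne2] := eqVneq v (inl e2); first by rewrite edge_in_basis.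
  have [->|ne1] := eqVneq v (inl e1); first by rewrite edge_in_basis.
  rewrite /c' (negbTE ne1) (negbTE ne2) !mulr0 !addr0 => /suppc/imsetP[e].
  by rewrite inE => /andP[eL' _] ->; apply: edge_in_basis.
have Ac' r : colcomb c' r = 0.
  rewrite !colcomb_add Ac (colA_ends r e1E (gadj_neq ua)) (colA_ends r e2E (gadj_neq ub)).
  rewrite (sgn_adj ua) (sgn_adj ub); ring.
have := basis_col_free suppc' Ac' (inl e2).
rewrite /c' ce2 eqxx (negbTE e21) mulr1 mulr0 addr0 add0r => /eqP.
by rewrite (negbTE (sgn_neq0 a)).
Qed.

Lemma connect_root n : exists2 r, r \in J' & connect adj n (inr r).
Proof.
pose rootless m := ~~ [exists r in J', connect adj m (inr r)].
suff : ~~ rootless n by rewrite negbK => /exists_inP.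
(* The signed indicator of the rootless nodes annihilates every basic column. *)
apply/negP => nr; pose w m : R := if rootless m then sgn m else 0.
suff : w n = 0 by rewrite /w nr => /eqP; rewrite (negbTE (sgn_neq0 n)).
apply: basis_row_free => _ /setUP[] /imsetP[e eL' ->]; last first.
  under eq_bigr do rewrite colA_slack; rewrite sum_mul_delta /w /rootless.
  by case: exists_inP => // -[]; exists e.
case: e eL' => k m kmL'.
rewrite (eq_bigr (fun r => w r * ((r == inl k)%:R + (r == inr m)%:R))); last first.
  by move=> r _; rewrite (colA_ends _ (erefl (ends (k, m)))).
under eq_bigr do rewrite mulrDr; rewrite big_split /= !sum_mul_delta /w.
have km : connect adj (inl k) (inr m) by apply: connect1.
have -> : rootless (inl k) = rootless (inr m).
  congr (~~ _); apply: eq_existsb => r.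
  by rewrite (same_connect (sym_connect_sym gadj_sym) km).
by rewrite /rootless; case: exists_inP; rewrite /= ?addr0 // addrN.
Qed.

Lemma rooted_wo_either a b : a != b -> rooted_wo a b || rooted_wo b a.
Proof.
move=> ab; have [r rJ' ar] := connect_root a.
rewrite (sym_connect_sym gadj_sym) in ar.
pose D := pred2 a b.
have escape v w z : connect (avoiding adj D) z (inr r) -> w \in D ->
    (v == z) || adj_wo w v z -> rooted_wo w v.
  move=> + wD => /(connect_avoiding_wo (fun _ _ => id) wD) zr vz.
  apply/exists_inP; exists r => //.
  by case/orP: vz => [/eqP->//|vz]; apply: connect_trans (connect1 vz) zr.
have [rD|rD] := boolP (inr r \in D).
  by case/orP: rD => /eqP rE; apply/orP; [right|left];
    apply: (escape _ _ (inr r)); rewrite ?inE ?rE ?eqxx ?orbT.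
have [[aD _]|[z [d [zD dD rz zd]]]] := connect_avoid_or_hit ar rD.
  by rewrite inE eqxx in aD.
rewrite (sym_connect_sym (avoiding_sym D gadj_sym)) in rz.
move: zD; rewrite inE negb_or => /andP[za zb]; have ba : b != a by rewrite eq_sym.
by case/orP: dD => /eqP dE; subst d; apply/orP; [right|left];
  apply: (escape _ _ z rz); rewrite ?inE ?eqxx ?orbT //= /gadj_wo gadj_sym zd
  ?ab ?ba ?za ?zb orbT.
Qed.

Lemma subtree_cut c p a b :
  is_child L' J' c p -> adj a b -> a \in T c -> b \notin T c -> a = c /\ b = p.
Proof.
case/andP=> cp cTp ab aT bT.
have ac : a = c by apply/eqP; apply: contraNT bT; apply: subtree_adj.
subst a; split => //; apply/eqP; apply: contraT => bp.
have /exists_inP[r rJ' br] := subtree_exit ab aT bT.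
have [[_ bar]|[z [d [_ /eqP-> bz zp]]]] := connect_avoid_or_hit (D := pred1 p) br bp.
  move: cTp; rewrite in_subtree (negbTE (gadj_neq cp)) /= => /andP[_] /negP[].
  have cb : adj_wo p c b by rewrite /gadj_wo ab bp (gadj_neq cp).
  apply/exists_inP; exists r => //; apply: connect_trans (connect1 cb) _.
  by apply: connect_avoiding_wo bar; [apply: gadj_wo_sub | rewrite inE].
have bp' := connect_trans (connect_avoiding_sub bz) (connect1 zp).
by move: (no_cycle ab cp bp); rewrite bp'.
Qed.

Lemma parent_notin_subtree c p : is_child L' J' c p -> p \notin T c.
Proof.
case/andP=> cp; rewrite in_subtree (negbTE (gadj_neq cp)) /= => /andP[_ ncp].
have := rooted_wo_either (gadj_neq cp); rewrite (negbTE ncp) orbF => rcp.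
by rewrite in_subtree eq_sym (negbTE (gadj_neq cp)) rcp andbF.
Qed.

Lemma subtree_flow lam mu (eps : R) x sigma c p e0 :
  basic_solution L L' J' lam mu eps x sigma ->
  is_child L' J' c p -> e0 \in L' -> ends e0 = [set c; p] ->
  sumC L' J' lam c - sumS L' J' mu eps c =
  x e0 * ((inl e0.1 \in T c)%:R - (inr e0.2 \in T c)%:R).
Proof.
move=> sol cp e0L' e0E; have [L'L _ _] := basis.
rewrite /sumC /sumS (flow_balance sol (child_subtree_no_root cp)).
rewrite (bigD1 e0) ?(subsetP L'L) //= big1 ?addr0 // => e /andP[eL ne].
have [eL'|eL'] := boolP (e \in L'); last by case: sol => _ _ x0 _; rewrite x0 ?mul0r.
suff -> : (inl e.1 \in T c) = (inr e.2 \in T c) by rewrite subrr mulr0.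
have ee : adj (inl e.1) (inr e.2) by case: e {ne eL} eL'.
apply/idP/idP => eT; apply: contraNT ne => eT'; apply/eqP/ends_inj; rewrite e0E.
  by have [<- <-] := subtree_cut cp ee eT eT'.
by rewrite gadj_sym in ee; have [<- <-] := subtree_cut cp ee eT eT'; rewrite setUC.
Qed.

End Basis.

End Forest.

Theorem lemma2 (R : realFieldType) (nI nJ : nat) (L : {set 'I_nI * 'I_nJ})
  (lam : 'I_nI -> R) (mu : 'I_nJ -> R) (theta : 'I_nI * 'I_nJ -> R) (eps : R)
  (L' : {set 'I_nI * 'I_nJ}) (J' : {set 'I_nJ})
  (x : 'I_nI * 'I_nJ -> R) (sigma : 'I_nJ -> R) :
  (forall i, 0 < lam i) -> (forall j, 0 < mu j) ->
  (forall e, e \in L -> 0 <= theta e) -> 0 <= eps ->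
  is_basis R L L' J' ->
  basic_solution L L' J' lam mu eps x sigma ->
  forall i j, (i, j) \in L ->
    [/\ is_child L' J' (inl i) (inr j) ->
          x (i, j) = sumC L' J' lam (inl i) - sumS L' J' mu eps (inl i),
        is_child L' J' (inr j) (inl i) ->
          x (i, j) = sumS L' J' mu eps (inr j) - sumC L' J' lam (inr j) &
        (i, j) \notin L' -> x (i, j) = 0].
Proof.
move=> _ _ _ _ basis sol i j ijL; split; last by case: sol => _ _ x0 _; apply: x0.
- move=> cij; have ijL' : (i, j) \in L' by case/andP: cij.
  rewrite (subtree_flow basis sol cij ijL' erefl) /= subtree_self.
  by rewrite (negbTE (parent_notin_subtree basis cij)) subr0 mulr1.
- move=> cji; have ijL' : (i, j) \in L' by case/andP: cji.
  rewrite -opprB (subtree_flow basis sol cji ijL' (setUC _ _)) /= subtree_self.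
  by rewrite (negbTE (parent_notin_subtree basis cji)) sub0r mulrN1 opprK.
Qed.
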